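(* Let $n\in\mathbb N_0$, $j\in\mathbb Z$, $s\in\mathbb N_0$ and $1\le\ell\le a^d_n$. Then for all $x\in\mathbb B^d$ and $\xi\in\mathbb S^{d-1}$, $$\Delta^sY^{n,j}_\ell(x)=Y^{n,j-s}_\ell(x)\qquad\text{and}\qquad\Delta^sY^{n,j}_\ell(\xi)=\delta_{s,j}Y^n_\ell(\xi).$$
   Context: $\mathbb B^d$ unit ball, $\mathbb S^{d-1}$ unit sphere in $\mathbb R^d$; $(a)_0=1$, $(a)_m=a(a+1)\cdots(a+m-1)$. $\mathcal H^d_n$: homogeneous harmonic polynomials of degree $n$, $a^d_n=\dim\mathcal H^d_n$, $\{Y^n_\ell\}_{\ell=1}^{a^d_n}$ an orthonormal basis of $\mathcal H^d_n$ with respect to the normalized surface measure on $\mathbb S^{d-1}$. For $n,j\in\mathbb N_0$ let $(c^{n,j}_i)_{0\le i\le j}$ be the unique solution of the linear system $$4^k\sum_{i=k}^j(-i)_k(-k)_{i-k}\frac{(n+d/2)_k}{(n+d/2)_{i-k}}c_i=\delta_{k,j},\qquad 0\le k\le j,$$ and set $Y^{n,j}_\ell(x)=\sum_{i=0}^jc^{n,j}_i(1-\|x\|^2)^iY^n_\ell(x)$; for $j<0$ set $Y^{n,j}_\ell:=0$. *)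

From HB Require Import structures.
From mathcomp Require Import all_boot all_order all_algebra.
From mathcomp Require Import reals.
From mathcomp Require Import mpoly.
Set Implicit Arguments. Unset Strict Implicit. Unset Printing Implicit Defensive.
Import Order.TTheory GRing.Theory Num.Theory.
Local Open Scope ring_scope.

Section Defs.
Variables (R : realType) (d : nat).

Definition poch (a : R) (m : nat) : R := \prod_(k < m) (a + k%:R).

Definition laplacian (p : {mpoly R[d]}) : {mpoly R[d]} :=
  \sum_(i < d) mderiv i (mderiv i p).

Definition laplacian_iter (s : nat) (p : {mpoly R[d]}) : {mpoly R[d]} :=
  iter s laplacian p.

Definition homogeneous (n : nat) (p : {mpoly R[d]}) : bool :=
  p \is @ishomog1 d R n mdeg.

Definition harmonic_homogeneous (n : nat) (p : {mpoly R[d]}) : Prop :=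
  homogeneous n p /\ laplacian p = 0.

Definition one_minus_norm2 : {mpoly R[d]} := 1 - \sum_(i < d) 'X_i ^+ 2.

Definition norm2 (x : 'I_d -> R) : R := \sum_(i < d) x i ^+ 2.

(* (c_i)_{0<=i<=j} solves the linear system of the paper defining c^{n,j} *)
Definition solves_system (n j : nat) (c : nat -> R) : Prop :=
  forall k : nat, (k <= j)%N ->
    4 ^+ k * \sum_(k <= i < j.+1)
      (poch (- i%:R) k * poch (- k%:R) (i - k)
        * poch (n%:R + d%:R / 2) k / poch (n%:R + d%:R / 2) (i - k)) * c i
    = (k == j)%:R.

(* Y^{n,j} built from Y in H^d_n and a family of coefficient sequences
   c j = (c^{n,j}_i)_i ; zero for negative j *)
Definition Ynj (c : nat -> nat -> R) (Y : {mpoly R[d]}) (j : int)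
  : {mpoly R[d]} :=
  match j with
  | Posz j => \sum_(i < j.+1) c j i *: (one_minus_norm2 ^+ i * Y)
  | Negz _ => 0
  end.

End Defs.

From HB Require Import structures.
From mathcomp Require Import all_boot all_order all_algebra.
From mathcomp Require Import reals.
From mathcomp Require Import mpoly.
From mathcomp Require Import ring lra zify.
Set Implicit Arguments. Unset Strict Implicit. Unset Printing Implicit Defensive.
Import Order.TTheory GRing.Theory Num.Theory.
Local Open Scope ring_scope.

(* Write u = 1 - |x|^2.  For Y harmonic and homogeneous of degree n, the product rule and
   Euler's identity x . grad Y = n Y give
     Delta (u^i Y) = 4i(i-1) u^(i-2) Y - 4i(i-1+n+d/2) u^(i-1) Y,
   so Delta maps sum_i e_i u^i Y to sum_i e'_i u^i Y for an explicit lowering map e |-> e'.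
   The rows of the matrix of the defining system obey row_(k+1) = row_k o (e |-> e'); hence
   the coefficients of Delta Y^(n,j+1) solve the system defining Y^(n,j).  That system is
   triangular with nonzero diagonal, so Delta Y^(n,j+1) = Y^(n,j), and iterating gives the
   first claim.  On the sphere u vanishes, so only c^(n,j)_0 survives, and the equation of
   the system with k = 0 says that it equals delta_(j,0). *)

Section MDeriv.
Variables (R : comNzRingType) (d : nat).
Implicit Types p : {mpoly R[d]}.

Lemma mderivXU (i k : 'I_d) : mderiv k ('X_i : {mpoly R[d]}) = (i == k)%:R.
Proof.
rewrite mderivX mnm1E; case: eqP => [->|_]; last by rewrite scale0r.
by rewrite (_ : U_(k) - U_(k) = 0)%MM ?mpolyX0 ?scale1r //; apply/mnmP=> l; rewrite !mnmE subnn.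
Qed.

Lemma mderivXn k p i : mderiv k (p ^+ i) = i%:R *: (p ^+ i.-1 * mderiv k p).
Proof.
elim: i => [|[|i] IH]; first by rewrite expr0 mderivC scale0r.
  by rewrite expr1 expr0 mul1r scale1r.
by rewrite exprS mderivM IH /= -!mul_mpolyC !mpolyC_nat exprS; ring.
Qed.

Lemma sum_mulX_mderiv_dhomog n p : p \is @ishomog1 d R n mdeg ->
  \sum_(k < d) ('X_k * mderiv k p) = n%:R *: p.
Proof.
move=> /dhomogP hp; rewrite {2}[p]mpolyE scaler_sumr.
under eq_bigr do rewrite /mderiv mulr_sumr.
rewrite exchange_big /= big_seq [in RHS]big_seq; apply: eq_bigr => m mp.
have -> : n = (\sum_(i < d) m i)%N by rewrite -(hp m mp); exact: mdegE.
rewrite natr_sum scaler_suml; apply: eq_bigr => k _.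
rewrite -scalerAr [RHS]scalerA; have [->|nz] := eqVneq (m k) 0%N.
  by rewrite !mul0r !scale0r.
by rewrite -mpolyXD addmC submK // lep1mP.
Qed.

End MDeriv.

Section TriangularSystem.
Variable R : idomainType.

Lemma triangular_sys_eq0 (F : nat -> nat -> R) (g : nat -> R) (j : nat) :
  (forall k i, (i < k)%N -> F k i = 0) -> (forall k, F k k != 0) ->
  (forall k, (k <= j)%N -> \sum_(i < j.+1) F k i * g i = 0) ->
  forall m, (m <= j)%N -> g m = 0.
Proof.
move=> F_lower F_diag sys.
suff g0 t m : (j - t <= m <= j)%N -> g m = 0 by move=> m mj; apply: (g0 j); lia.
elim: t m => [|t IH] m /andP[jtm mj]; have := sys m mj.
all: rewrite (bigD1 (Ordinal (mj : (m < j.+1)%N))) //= big1 ?addr0.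
all: try by move/eqP; rewrite mulf_eq0 (negbTE (F_diag m)) => /eqP.
all: move=> i neq_im; case: (ltngtP i m) => [im|mi|eq_im].
all: try by rewrite F_lower ?mul0r.
all: try by move/eqP: neq_im => []; apply: val_inj.
- by have := ltn_ord i; lia.
- by rewrite IH ?mulr0 //; have := ltn_ord i; lia.
Qed.

End TriangularSystem.

Section Laplacian.
Variables (R : realType) (d : nat).
Implicit Types (p q : {mpoly R[d]}).
Local Notation u := (one_minus_norm2 R d).

Lemma laplacian_is_linear : linear (@laplacian R d).
Proof.
move=> k p q; rewrite /laplacian scaler_sumr -big_split /=.
by apply: eq_bigr => i _; rewrite !linearP.
Qed.

HB.instance Definition _ := GRing.isLinear.Build R {mpoly R[d]} {mpoly R[d]} _
  (@laplacian R d) laplacian_is_linear.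

Lemma laplacianM p q : laplacian (p * q) =
  laplacian p * q + 2%:R *: \sum_(k < d) (mderiv k p * mderiv k q) + p * laplacian q.
Proof.
rewrite /laplacian scaler_sumr mulr_suml mulr_sumr -!big_split /=.
apply: eq_bigr => k _; rewrite !mderivM !mderivD !mderivM.
by rewrite -mul_mpolyC mpolyC_nat; ring.
Qed.

Lemma mderiv_one_minus_norm2 k : mderiv k u = - (2%:R *: 'X_k).
Proof.
rewrite /one_minus_norm2 mderivB mderivC sub0r (raddf_sum (mderiv k)) (bigD1 k) //= big1.
  by rewrite addr0 mderivXn mderivXU eqxx expr1 mulr1.
by move=> i /negbTE ik; rewrite mderivXn mderivXU ik mulr0 scaler0.
Qed.

Lemma laplacian_one_minus_norm2X i : laplacian (u ^+ i) =
  (4 * i%:R * i.-1%:R) *: (u ^+ i.-2 * (1 - u)) - (2 * i%:R * d%:R) *: u ^+ i.-1.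
Proof.
have norm2E : \sum_(k < d) 'X_k ^+ 2 = 1 - u by rewrite /one_minus_norm2; ring.
have -> : (2 * i%:R * d%:R) *: u ^+ i.-1 = \sum_(k < d) (2 * i%:R) *: u ^+ i.-1.
  by rewrite sumr_const card_ord -scaler_nat scalerA mulrC.
rewrite /laplacian -norm2E mulr_sumr scaler_sumr -sumrB; apply: eq_bigr => k _.
rewrite mderivXn mderiv_one_minus_norm2 mderivZ mderivM mderivXn.
rewrite mderiv_one_minus_norm2 mderivN mderivZ mderivXU eqxx.
by rewrite -!mul_mpolyC !mpolyC_nat !rmorphM /= !mpolyC_nat; ring.
Qed.

Definition lap_coef2 (i : nat) : R := 4 * i%:R * i.-1%:R.
Definition lap_coef1 (n i : nat) : R := 4 * i%:R * (i.-1%:R + (n%:R + d%:R / 2)).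

Lemma lap_coef2_1 : lap_coef2 1 = 0.
Proof. by rewrite /lap_coef2 /= mulr0. Qed.

Lemma laplacian_one_minus_norm2XM n Y i : harmonic_homogeneous n Y ->
  laplacian (u ^+ i * Y) =
  lap_coef2 i *: (u ^+ i.-2 * Y) - lap_coef1 n i *: (u ^+ i.-1 * Y).
Proof.
case=> homY harmY; rewrite laplacianM harmY mulr0 addr0 laplacian_one_minus_norm2X.
have -> : \sum_(k < d) (mderiv k (u ^+ i) * mderiv k Y) =
    (- (2 * i%:R)) *: (u ^+ i.-1 * \sum_(k < d) ('X_k * mderiv k Y)).
  rewrite mulr_sumr scaler_sumr; apply: eq_bigr => k _.
  rewrite mderivXn mderiv_one_minus_norm2 -!mul_mpolyC !rmorphN !rmorphM /=.
  by rewrite !mpolyC_nat; ring.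
have coef1E : lap_coef1 n i = 4 * i%:R * i.-1%:R + 4 * i%:R * n%:R + 2 * i%:R * d%:R.
  by rewrite /lap_coef1; field.
rewrite (sum_mulX_mderiv_dhomog homY) coef1E /lap_coef2 -!mul_mpolyC !rmorphD !rmorphN !rmorphM /=.
rewrite !mpolyC_nat; case: i {coef1E} => [|[|i]] /=; rewrite ?expr0; try ring.
by rewrite exprS; ring.
Qed.

Lemma Ynj_lt0 (c : nat -> nat -> R) (Y : {mpoly R[d]}) (t : int) :
  (t < 0)%R -> Ynj c Y t = 0.
Proof. by case: t. Qed.

Lemma meval_one_minus_norm2 (x : 'I_d -> R) : (one_minus_norm2 R d).@[x] = 1 - norm2 x.
Proof.
rewrite /one_minus_norm2 mevalB meval1 (raddf_sum (meval x)) /norm2; congr (_ - _).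
by apply: eq_bigr => i _; rewrite /= [in LHS]expr2 mevalM mevalXU expr2.
Qed.

Lemma poch0 (x : R) : poch x 0 = 1.
Proof. exact: big_ord0. Qed.

Lemma pochS (x : R) m : poch x m.+1 = poch x m * (x + m%:R).
Proof. exact: big_ord_recr. Qed.

Lemma pochSl (x : R) m : poch x m.+1 = x * poch (x + 1) m.
Proof.
rewrite /poch big_ord_recl addr0; congr (_ * _); apply: eq_bigr => i _.
by rewrite /bump /= natrD addrA.
Qed.

Lemma poch_gt0 (x : R) m : 0 < x -> 0 < poch x m.
Proof. by move=> x_gt0; apply: prodr_gt0 => i _; rewrite ltr_wpDr. Qed.

Lemma poch_oppn_neq0 k : poch (- k%:R : R) k != 0.
Proof.
by apply/prodf_neq0 => i _; rewrite addrC subr_eq0 eqr_nat neq_ltn ltn_ord.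
Qed.

Lemma poch_oppSn k m : poch (- m.+1%:R : R) k.+1 = - m.+1%:R * poch (- m%:R) k.
Proof. by rewrite pochSl -natr1 opprD addrNK. Qed.

Lemma poch_oppn_shift k m :
  m.+1%:R * poch (- m%:R : R) k = poch (- m.+1%:R) k * (m.+1%:R - k%:R).
Proof.
have := pochS (- m.+1%:R : R) k; rewrite poch_oppSn => /(congr1 -%R).
by rewrite -mulNr opprK => ->; rewrite -mulrN opprD opprK addrC.
Qed.

Section Coefficients.
Variables (n : nat) (d_gt0 : (0 < d)%N).
Local Notation a := (n%:R + d%:R / 2 : R).

Definition sys_coef (k i : nat) : R :=
  if (k <= i)%N then
    4 ^+ k * (poch (- i%:R) k * poch (- k%:R) (i - k) * poch a k / poch a (i - k))
  else 0.

Lemma a_gt0 : 0 < a.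
Proof. by rewrite ltr_wpDl ?ler0n // divr_gt0 ?ltr0n. Qed.

Lemma sys_coef_lower k i : (i < k)%N -> sys_coef k i = 0.
Proof. by rewrite /sys_coef ltnNge => /negbTE ->. Qed.

Lemma sys_coef_diag k : sys_coef k k = 4 ^+ k * (poch (- k%:R) k * poch a k).
Proof. by rewrite /sys_coef leqnn subnn !poch0 mulr1 divr1. Qed.

Lemma sys_coef_diag_neq0 k : sys_coef k k != 0.
Proof.
rewrite sys_coef_diag !mulf_neq0 ?expf_neq0 ?poch_oppn_neq0 ?pnatr_eq0 //.
by rewrite lt0r_neq0 ?poch_gt0 ?a_gt0.
Qed.

Lemma sys_coef0 i : sys_coef 0 i = (i == 0)%:R.
Proof.
rewrite /sys_coef /= subn0 expr0 !poch0 !mul1r mulr1; case: i => [|i].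
  by rewrite !poch0 divr1.
by rewrite pochSl oppr0 !mul0r.
Qed.

Lemma sys_coef_addn k m :
  sys_coef k (k + m) = 4 ^+ k * (poch (- (k + m)%:R) k * poch (- k%:R) m * poch a k / poch a m).
Proof. by rewrite /sys_coef leq_addr addKn. Qed.

Lemma sys_coefSS_addn k m : sys_coef k.+1 (k + m).+2 =
  lap_coef2 (k + m).+2 * sys_coef k (k + m) - lap_coef1 n (k + m).+2 * sys_coef k (k + m).+1.
Proof.
have -> : (k + m).+2 = (k.+1 + m.+1)%N by rewrite addSn addnS.
rewrite -addnS !sys_coef_addn.
rewrite !addSn !addnS /lap_coef2 /lap_coef1 /= !poch_oppSn !pochS.
have -> : poch (- (k + m)%:R : R) k = poch (- (k + m).+1%:R) k * m.+1%:R / (k + m).+1%:R.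
  have mE : m.+1%:R = (k + m).+1%:R - k%:R :> R by rewrite -natrB; [congr _%:R |]; lia.
  by rewrite mE -poch_oppn_shift mulrC mulKf ?pnatr_eq0.
have d_gt0' : 0 < d%:R :> R by rewrite ltr0n.
have n_ge0 : 0 <= n%:R :> R by rewrite ler0n.
have m_ge0 : 0 <= m%:R :> R by rewrite ler0n.
have k_ge0 : 0 <= k%:R :> R by rewrite ler0n.
move: (poch a m) (lt0r_neq0 (poch_gt0 m a_gt0)) => Pm Pm_neq0.
rewrite !exprS -!natr1 !natrD.
by field; rewrite Pm_neq0 /=; apply/andP; split; apply/eqP => h; lra.
Qed.

Lemma sys_coefSS_diag i : sys_coef i.+1 i.+1 = - lap_coef1 n i.+1 * sys_coef i i.
Proof. by rewrite !sys_coef_diag poch_oppSn pochS /lap_coef1 exprS /= -!natr1; ring. Qed.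

Lemma sys_coefS k i : sys_coef k.+1 i.+1 =
  lap_coef2 i.+1 * sys_coef k i.-1 - lap_coef1 n i.+1 * sys_coef k i.
Proof.
case: (ltngtP i k) => [ik | ki | <-{k}].
- by rewrite !sys_coef_lower ?mulr0 ?subr0 //; lia.
- have [m ->] : exists m, i = (k + m).+1 by exists (i - k.+1)%N; lia.
  exact: sys_coefSS_addn.
- rewrite sys_coefSS_diag (_ : lap_coef2 i.+1 * sys_coef i i.-1 = 0) ?sub0r ?mulNr //.
  case: i => [|i]; last by rewrite sys_coef_lower ?mulr0.
  by rewrite /lap_coef2 /= mulr0 mul0r.
Qed.

Lemma solves_systemE j (e : nat -> R) : solves_system d n j e ->
  forall k, (k <= j)%N -> \sum_(i < j.+1) sys_coef k i * e i = (k == j)%:R.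
Proof.
move=> sys k kj; rewrite -(sys k kj) big_geq_mkord mulr_sumr [RHS]big_mkcond.
apply: eq_bigr => i _ /=; rewrite /sys_coef; case: (k <= i)%N; last by rewrite mul0r.
exact: esym (mulrA _ _ _).
Qed.

Lemma solves_system_coef0 j (e : nat -> R) : solves_system d n j e -> e 0 = (j == 0)%:R.
Proof.
move=> /solves_systemE /(_ 0 (leq0n j)); rewrite eq_sym big_ord_recl sys_coef0 mul1r.
by rewrite big1 ?addr0 // => i _; rewrite sys_coef0 mul0r.
Qed.

Definition lap_seq (e : nat -> R) (i : nat) : R :=
  lap_coef2 i.+2 * e i.+2 - lap_coef1 n i.+1 * e i.+1.

Lemma sum_sys_coef_lap_seq k N (e : nat -> R) : e N.+2 = 0 ->
  \sum_(i < N.+1) sys_coef k i * lap_seq e i = \sum_(i < N.+2) sys_coef k.+1 i * e i.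
Proof.
move=> eN; rewrite [RHS]big_ord_recl sys_coef_lower // mul0r add0r.
under eq_bigr do rewrite /lap_seq mulrBr.
under [RHS]eq_bigr do rewrite sys_coefS mulrBl.
rewrite !sumrB; congr (_ - _); last first.
  by apply: eq_bigr => i _; rewrite mulrCA mulrA.
rewrite big_ord_recr big_ord_recl /= eN lap_coef2_1 !mulr0 addr0 !mul0r add0r.
by apply: eq_bigr => i _; rewrite /bump /= add0n mulrCA mulrA.
Qed.

Lemma sys_coef_sum_inj k (e e' : nat -> R) j : (forall k, (k <= j)%N ->
  \sum_(i < j.+1) sys_coef k i * e i = \sum_(i < j.+1) sys_coef k i * e' i) ->
  (k <= j)%N -> e k = e' k.
Proof.
move=> sys kj; apply/eqP; rewrite -subr_eq0; apply/eqP.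
apply: (triangular_sys_eq0 (g := fun i => e i - e' i) sys_coef_lower sys_coef_diag_neq0 _ kj).
move=> l lj.
by under eq_bigr do rewrite mulrBr; rewrite sumrB sys // subrr.
Qed.

Section Ynj.
Variables (c : nat -> nat -> R) (Y : {mpoly R[d]}).
Hypothesis harmY : harmonic_homogeneous n Y.
Hypothesis sys_c : forall j : nat, solves_system d n j (c j).

Lemma laplacian_sum_one_minus_norm2XM (e : nat -> R) N : e N.+2 = 0 ->
  laplacian (\sum_(i < N.+2) e i *: (u ^+ i * Y)) =
  \sum_(i < N.+1) lap_seq e i *: (u ^+ i * Y).
Proof.
move=> eN; rewrite raddf_sum /=.
under eq_bigr do rewrite linearZ /= (laplacian_one_minus_norm2XM _ harmY) scalerBr !scalerA.
under [RHS]eq_bigr do rewrite /lap_seq scalerBl.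
have lap_coef2_0 : lap_coef2 0 = 0 by rewrite /lap_coef2 !(mulr0, mul0r).
have lap_coef1_0 : lap_coef1 n 0 = 0 by rewrite /lap_coef1 !(mulr0, mul0r).
rewrite !sumrB; congr (_ - _).
  rewrite 2!big_ord_recl [RHS]big_ord_recr /= eN lap_coef2_0 lap_coef2_1.
  rewrite !mulr0 !scale0r !add0r addr0; apply: eq_bigr => i _.
  by rewrite /bump /= !add0n mulrC.
rewrite big_ord_recl /= lap_coef1_0 mulr0 scale0r add0r.
by apply: eq_bigr => i _; rewrite /bump /= add0n mulrC.
Qed.

Lemma laplacian_YnjS (j : nat) : laplacian (Ynj c Y j.+1) = Ynj c Y j.
Proof.
pose e i := if (i < j.+2)%N then c j.+1 i else 0.
have -> : Ynj c Y j.+1 = \sum_(i < j.+2) e i *: (u ^+ i * Y).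
  by apply: eq_bigr => i _; rewrite /e ltn_ord.
have eN : e j.+2 = 0 by rewrite /e ltnn.
rewrite laplacian_sum_one_minus_norm2XM //.
apply: eq_bigr => i _; congr (_ *: _).
apply: (sys_coef_sum_inj (e := lap_seq e) (e' := c j) _ (ltn_ord i : (i <= j)%N)).
move=> k kj.
rewrite sum_sys_coef_lap_seq // (solves_systemE (@sys_c j) kj) -eqSS.
rewrite -(solves_systemE (@sys_c j.+1)) //.
by apply: eq_bigr => l _; rewrite /e ltn_ord.
Qed.

Lemma laplacian_Ynj (t : int) : laplacian (Ynj c Y t) = Ynj c Y (t - 1).
Proof.
case: t => [[|j]|m].
- rewrite [RHS]Ynj_lt0 //= big_ord1 linearZ /= expr0 mul1r.
  by case: harmY => _ ->; rewrite scaler0.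
- by rewrite laplacian_YnjS; congr Ynj; lia.
- by rewrite !Ynj_lt0 ?linear0 //; lia.
Qed.

Lemma laplacian_iter_Ynj s (t : int) :
  laplacian_iter s (Ynj c Y t) = Ynj c Y (t - s%:Z).
Proof.
elim: s => [|s IH]; first by rewrite subr0.
by rewrite /laplacian_iter iterS -/(laplacian_iter s _) IH laplacian_Ynj; congr Ynj; lia.
Qed.

Lemma Ynj_sphere (j : nat) (xi : 'I_d -> R) : norm2 xi = 1 ->
  (Ynj c Y j).@[xi] = (j == 0)%:R * Y.@[xi].
Proof.
move=> xi1; rewrite /= raddf_sum big_ord_recl /= big1 ?addr0.
  by rewrite mevalZ mevalM expr0 meval1 mul1r (solves_system_coef0 (@sys_c j)).
move=> i _; rewrite mevalZ mevalM rmorphXn /= meval_one_minus_norm2 xi1 subrr.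
by rewrite expr0n /= mul0r mulr0.
Qed.

End Ynj.
End Coefficients.
End Laplacian.

Theorem lemma3p6 (R : realType) (d : nat) (hd : (0 < d)%N)
  (n : nat) (c : nat -> nat -> R)
  (hc : forall j : nat, solves_system d n j (c j))
  (Y : {mpoly R[d]}) (hY : harmonic_homogeneous n Y)
  (j : int) (s : nat) :
  (forall x : 'I_d -> R, norm2 x < 1 ->
     (laplacian_iter s (Ynj c Y j)).@[x] = (Ynj c Y (j - s%:Z)).@[x]) /\
  (forall xi : 'I_d -> R, norm2 xi = 1 ->
     (laplacian_iter s (Ynj c Y j)).@[xi] = (j == s%:Z)%:R * Y.@[xi]).
Proof.
have lap_iter := laplacian_iter_Ynj hd hY hc.
split=> [x _ | xi xi1]; rewrite lap_iter //.
case jsE: (j - s%:Z) => [t|t].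
  have -> : (j == s%:Z) = (t == 0)%N by apply/idP/idP => /eqP eq0; apply/eqP; lia.
  exact: Ynj_sphere.
rewrite Ynj_lt0 // meval0 (_ : j == s%:Z = false) ?mul0r //.
by apply/eqP; lia.
Qed.
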